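(* Let $Q$ be a non-degenerate self-intersecting quadrangle of perimeter $2$. Then its dual quadrangle $Q^\circ$ is also self-intersecting.
   Context: Identify $\mathbb{R}^2$ with $\mathbb{C}$. A quadrangle $Q=ABCD$ is an ordered 4-tuple of points $A,B,C,D\in\mathbb{C}$: $A$ is the first vertex and the order $A\to B\to C\to D\to A$ is the direction of traversal. Its edge vectors are $z_1=B-A$, $z_2=C-B$, $z_3=D-C$, $z_4=A-D$, so $z_1+z_2+z_3+z_4=0$; its perimeter is $|z_1|+|z_2|+|z_3|+|z_4|$. $Q$ is non-degenerate if each pair of consecutive edge vectors $(z_1,z_2),(z_2,z_3),(z_3,z_4),(z_4,z_1)$ consists of nonzero, non-collinear vectors. A non-degenerate quadrangle is self-intersecting if one of the pairs of opposite edges (segments $AB$ and $CD$, or $BC$ and $DA$) intersect; it is convex if it is not self-intersecting and all its interior angles are less than $\pi$; it is non-convex if it is neither self-intersecting nor convex. Associated plane: for a non-degenerate $Q$ of perimeter $2$, choose $u_1,\dots,u_4\in\mathbb{C}$ with $u_k^2=z_k$, where $u_1$ is an arbitrary square root of $z_1$ and for $k=1,2,3$ the sign of $u_{k+1}$ is chosen so that $\operatorname{Im}(\overline{u_k}u_{k+1})$ has the same sign as $\operatorname{Im}(\overline{z_k}z_{k+1})$. Write $u_k=a_k+i b_k$ and $\bar a=(a_1,a_2,a_3,a_4)$, $\bar b=(b_1,b_2,b_3,b_4)$; these are orthonormal in $\mathbb{R}^4$. Let $\Pi=\operatorname{span}(\bar a,\bar b)$ and $\Pi^\perp$ its orthogonal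 complement. Dual quadrangle: choose an orthonormal basis $(\bar c,\bar d)$ of $\Pi^\perp$, put $w_k=(c_k+i d_k)^2$; then $\sum_k w_k=0$ and $\sum_k|w_k|=2$. The dual quadrangle $Q^\circ=KLMN$ is the quadrangle with $L-K=w_1$, $M-L=w_2$, $N-M=w_3$, $K-N=w_4$. It is determined up to rotation, reflection and translation. *)

From Stdlib Require Import Reals.
Open Scope R_scope.

Record Cpt := mkC { re : R ; im : R }.

Definition cadd (z w : Cpt) : Cpt := mkC (re z + re w) (im z + im w).
Definition csub (z w : Cpt) : Cpt := mkC (re z - re w) (im z - im w).
Definition cmul (z w : Cpt) : Cpt :=
  mkC (re z * re w - im z * im w) (re z * im w + im z * re w).
Definition csq (z : Cpt) : Cpt := cmul z z.
Definition cscale (t : R) (z : Cpt) : Cpt := mkC (t * re z) (t * im z).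
Definition czero : Cpt := mkC 0 0.
Definition cabs (z : Cpt) : R := sqrt (re z * re z + im z * im z).
(* Im(conj z * w) *)
Definition imcw (z w : Cpt) : R := re z * im w - im z * re w.

Definition good_pair (z w : Cpt) : Prop := z <> czero /\ w <> czero /\ imcw z w <> 0.

Definition z1 (A B Cc D : Cpt) := csub B A.
Definition z2 (A B Cc D : Cpt) := csub Cc B.
Definition z3 (A B Cc D : Cpt) := csub D Cc.
Definition z4 (A B Cc D : Cpt) := csub A D.

Definition perimeter (A B Cc D : Cpt) : R :=
  cabs (z1 A B Cc D) + cabs (z2 A B Cc D) + cabs (z3 A B Cc D) + cabs (z4 A B Cc D).

Definition nondegenerate (A B Cc D : Cpt) : Prop :=
  good_pair (z1 A B Cc D) (z2 A B Cc D) /\ good_pair (z2 A B Cc D) (z3 A B Cc D) /\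
  good_pair (z3 A B Cc D) (z4 A B Cc D) /\ good_pair (z4 A B Cc D) (z1 A B Cc D).

Definition segments_intersect (P Q R0 S : Cpt) : Prop :=
  exists s t : R, 0 <= s <= 1 /\ 0 <= t <= 1 /\
    cadd P (cscale s (csub Q P)) = cadd R0 (cscale t (csub S R0)).

Definition self_intersecting (A B Cc D : Cpt) : Prop :=
  nondegenerate A B Cc D /\
  (segments_intersect A B Cc D \/ segments_intersect B Cc D A).

Definition same_sign (x y : R) : Prop := 0 < x * y.

Definition admissible_roots (A B Cc D u1 u2 u3 u4 : Cpt) : Prop :=
  csq u1 = z1 A B Cc D /\ csq u2 = z2 A B Cc D /\
  csq u3 = z3 A B Cc D /\ csq u4 = z4 A B Cc D /\
  same_sign (imcw u1 u2) (imcw (z1 A B Cc D) (z2 A B Cc D)) /\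
  same_sign (imcw u2 u3) (imcw (z2 A B Cc D) (z3 A B Cc D)) /\
  same_sign (imcw u3 u4) (imcw (z3 A B Cc D) (z4 A B Cc D)).

Definition dot4 (x1 x2 x3 x4 y1 y2 y3 y4 : R) : R :=
  x1 * y1 + x2 * y2 + x3 * y3 + x4 * y4.

(* (c,d) with v_k = c_k + i d_k is an orthonormal basis of the orthogonal
   complement of span(a,b), where u_k = a_k + i b_k. *)
Definition orthonormal_basis_of_perp (u1 u2 u3 u4 v1 v2 v3 v4 : Cpt) : Prop :=
  let c := dot4 (re v1) (re v2) (re v3) (re v4) in
  let d := dot4 (im v1) (im v2) (im v3) (im v4) in
  c (re v1) (re v2) (re v3) (re v4) = 1 /\
  d (im v1) (im v2) (im v3) (im v4) = 1 /\
  c (im v1) (im v2) (im v3) (im v4) = 0 /\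
  c (re u1) (re u2) (re u3) (re u4) = 0 /\
  c (im u1) (im u2) (im u3) (im u4) = 0 /\
  d (re u1) (re u2) (re u3) (re u4) = 0 /\
  d (im u1) (im u2) (im u3) (im u4) = 0.

(* Write u_k = a_k + i b_k and v_k = c_k + i d_k.  A closed quadrangle of perimeter 2 with
   edges u_k^2 is the same as an orthonormal pair (a, b), so the rows a, b, c, d form an
   orthogonal 4x4 matrix.  Its columns are then orthonormal too, and complementary 2x2
   minors agree up to the determinant +-1.  Hence, with w_k = conj(u_k) u_(k+1), the dual
   products conj(v_k) v_(k+1) are -Re w_k +- i Im w_(k+2).
   The turn of the quadrangle at its k-th vertex has the sign of Re w_k Im w_k, and
   self-intersection means the turn signs are s,s,-s,-s or s,-s,-s,s.  The admissible
   choice of roots makes Re w_1, Re w_2, Re w_3 positive; as w_1 w_2 w_3 w_4 =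
   |u_1 u_2 u_3 u_4|^2 is a nonnegative real, Re w_4 is positive as well.  The dual turns
   are then, up to factors of one common sign, Im w_3, -Im w_4, Im w_1, -Im w_2, which
   exchanges the two self-intersecting sign patterns. *)

From Stdlib Require Import Reals Lra Psatz.
Open Scope R_scope.

Definition cdot (u v : Cpt) : R := re u * re v + im u * im v.
Definition cconj (u : Cpt) : Cpt := mkC (re u) (- im u).

Lemma cconj_mul u v : cmul (cconj u) v = mkC (cdot u v) (imcw u v).
Proof. unfold cmul, cconj, cdot, imcw; simpl; f_equal; ring. Qed.

Lemma cconj_mul_cycle u1 u2 u3 u4 :
  cmul (cmul (cmul (cconj u1) u2) (cmul (cconj u2) u3))
       (cmul (cmul (cconj u3) u4) (cmul (cconj u4) u1)) =
  mkC (cdot u1 u1 * cdot u2 u2 * cdot u3 u3 * cdot u4 u4) 0.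
Proof. unfold cmul, cconj, cdot; simpl; f_equal; ring. Qed.

Lemma imcw_csq u v : imcw (csq u) (csq v) = 2 * cdot u v * imcw u v.
Proof. unfold imcw, csq, cmul, cdot; simpl; ring. Qed.

Lemma cabs_csq u : cabs (csq u) = cdot u u.
Proof.
  unfold cabs, csq, cmul, cdot; simpl.
  replace ((re u * re u - im u * im u) * (re u * re u - im u * im u) +
           (re u * im u + im u * re u) * (re u * im u + im u * re u))
    with ((re u * re u + im u * im u) * (re u * re u + im u * im u)) by ring.
  apply sqrt_square; nra.
Qed.

Lemma re_cmul_neg_same_half_plane x y :
  0 < im x * im y -> im (cmul x y) = 0 -> re (cmul x y) < 0.
Proof. destruct x as [a b], y as [c d]; unfold cmul; simpl; intros; nra. Qed.

Lemma Rdiv_opposite_signs_bounds x y : x * y < 0 -> 0 <= x / (x - y) <= 1.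
Proof.
  intros Hxy.
  assert (Hd : x - y <> 0) by (intro; nra).
  assert (Ht : x / (x - y) * (x - y) = x) by (field; exact Hd).
  split; nra.
Qed.

Definition straddles (P Q R0 S : Cpt) : Prop :=
  imcw (csub Q P) (csub R0 P) * imcw (csub Q P) (csub S P) < 0.

Lemma straddles_segments_intersect P Q R0 S :
  straddles P Q R0 S -> straddles R0 S P Q -> segments_intersect P Q R0 S.
Proof.
  unfold straddles, segments_intersect.
  set (al := imcw (csub Q P) (csub R0 P)); set (be := imcw (csub Q P) (csub S P)).
  set (ga := imcw (csub S R0) (csub P R0)); set (ep := imcw (csub S R0) (csub Q R0)).
  intros H1 H2.
  exists (ga / (ga - ep)), (al / (al - be)).
  split; [now apply Rdiv_opposite_signs_bounds|].
  split; [now apply Rdiv_opposite_signs_bounds|].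
  assert (ga - ep <> 0) by (intro; nra).
  assert (al - be <> 0) by (intro; nra).
  unfold al, be, ga, ep, imcw, csub, cadd, cscale in *; simpl in *.
  f_equal; field; auto.
Qed.

Lemma affine_zero_opposite_signs al be t :
  0 <= t <= 1 -> al <> 0 -> be <> 0 -> (1 - t) * al + t * be = 0 -> al * be < 0.
Proof.
  intros Ht Ha Hb E.
  assert (t <> 0) by (intro; subst; lra).
  assert (t <> 1) by (intro; subst; lra).
  assert (0 < be * be) by nra.
  nra.
Qed.

Lemma segments_intersect_straddles P Q R0 S :
  imcw (csub Q P) (csub R0 P) <> 0 -> imcw (csub Q P) (csub S P) <> 0 ->
  imcw (csub S R0) (csub P R0) <> 0 -> imcw (csub S R0) (csub Q R0) <> 0 ->
  segments_intersect P Q R0 S -> straddles P Q R0 S /\ straddles R0 S P Q.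
Proof.
  intros H1 H2 H3 H4 [s [t [Hs [Ht E]]]].
  destruct P as [xP yP], Q as [xQ yQ], R0 as [xR yR], S as [xS yS].
  unfold straddles, cadd, cscale, csub in *; simpl in *.
  injection E as Ex Ey.
  split.
  - apply (affine_zero_opposite_signs _ _ t); auto.
    unfold imcw in *; simpl in *.
    transitivity ((xQ - xP) * (yR + t * (yS - yR) - yP) - (yQ - yP) * (xR + t * (xS - xR) - xP));
      [ring | rewrite <- Ex, <- Ey; ring].
  - apply (affine_zero_opposite_signs _ _ s); auto.
    unfold imcw in *; simpl in *.
    transitivity ((xS - xR) * (yP + s * (yQ - yP) - yR) - (yS - yR) * (xP + s * (xQ - xP) - xR));
      [ring | rewrite Ex, Ey; ring].
Qed.

(* Signs s,s,-s,-s (sides AB and CD cross) or s,-s,-s,s (sides BC and DA cross). *)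
Definition turn_pattern (p1 p2 p3 p4 : R) : Prop :=
  (0 < p1 * p2 /\ p2 * p3 < 0 /\ 0 < p3 * p4) \/
  (p1 * p2 < 0 /\ 0 < p2 * p3 /\ p3 * p4 < 0).

Lemma turn_pattern_nonzero p1 p2 p3 p4 :
  turn_pattern p1 p2 p3 p4 -> p1 <> 0 /\ p2 <> 0 /\ p3 <> 0 /\ p4 <> 0.
Proof. intros [H | H]; repeat split; intro; subst; nra. Qed.

Lemma turn_pattern_scale c1 c2 c3 c4 p1 p2 p3 p4 :
  0 < c1 * c2 -> 0 < c2 * c3 -> 0 < c3 * c4 ->
  turn_pattern (c1 * p1) (c2 * p2) (c3 * p3) (c4 * p4) <-> turn_pattern p1 p2 p3 p4.
Proof.
  intros H12 H23 H34; unfold turn_pattern.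
  replace (c1 * p1 * (c2 * p2)) with (c1 * c2 * (p1 * p2)) by ring.
  replace (c2 * p2 * (c3 * p3)) with (c2 * c3 * (p2 * p3)) by ring.
  replace (c3 * p3 * (c4 * p4)) with (c3 * c4 * (p3 * p4)) by ring.
  split; intros [H | H]; [left | right | left | right]; repeat split; nra.
Qed.

Lemma turn_pattern_iff_opposite_straddles p1 p2 p3 p4 :
  p1 + p3 = p2 + p4 ->
  turn_pattern p1 p2 p3 p4 <->
  (p1 * p4 < 0 /\ p2 * p3 < 0) \/ (p1 * p2 < 0 /\ p3 * p4 < 0).
Proof.
  intros E; split.
  - intros [H | H]; [left | right]; nra.
  - intros [[H14 H23] | [H12 H34]].
    + destruct (Rmult_neg_cases _ _ H14) as [[] | []];
        destruct (Rmult_neg_cases _ _ H23) as [[] | []]; try lra; left; nra.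
    + destruct (Rmult_neg_cases _ _ H12) as [[] | []];
        destruct (Rmult_neg_cases _ _ H34) as [[] | []]; try lra; right; nra.
Qed.

Lemma turn_pattern_dual x1 x2 x3 x4 :
  turn_pattern x1 x2 x3 x4 -> turn_pattern x3 (- x4) x1 (- x2).
Proof. intros [(q12 & q23 & q34) | (q12 & q23 & q34)]; [right | left]; repeat split; nra. Qed.

Definition crossing_turns (w1 w2 w3 w4 : Cpt) : Prop :=
  turn_pattern (imcw w1 w2) (imcw w2 w3) (imcw w3 w4) (imcw w4 w1).

Lemma good_pair_iff z w : good_pair z w <-> imcw z w <> 0.
Proof.
  split; [now intros (_ & _ & H)|].
  intros H; repeat split; auto; intro E; subst; apply H; unfold imcw, czero; simpl; ring.
Qed.

Section Quadrangle.
Variables A B Cc D : Cpt.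
Local Notation p1 := (imcw (z1 A B Cc D) (z2 A B Cc D)).
Local Notation p2 := (imcw (z2 A B Cc D) (z3 A B Cc D)).
Local Notation p3 := (imcw (z3 A B Cc D) (z4 A B Cc D)).
Local Notation p4 := (imcw (z4 A B Cc D) (z1 A B Cc D)).

Lemma straddles_turns :
  imcw (csub B A) (csub Cc A) = p1 /\ imcw (csub B A) (csub D A) = p4 /\
  imcw (csub D Cc) (csub A Cc) = p3 /\ imcw (csub D Cc) (csub B Cc) = p2 /\
  imcw (csub Cc B) (csub D B) = p2 /\ imcw (csub Cc B) (csub A B) = p1 /\
  imcw (csub A D) (csub B D) = p4 /\ imcw (csub A D) (csub Cc D) = p3.
Proof.
  destruct A, B, Cc, D; unfold z1, z2, z3, z4, imcw, csub; simpl; repeat split; ring.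
Qed.

Lemma turns_closed : p1 + p3 = p2 + p4.
Proof. destruct A, B, Cc, D; unfold z1, z2, z3, z4, imcw, csub; simpl; ring. Qed.

Lemma self_intersecting_iff_crossing_turns :
  self_intersecting A B Cc D <->
  crossing_turns (z1 A B Cc D) (z2 A B Cc D) (z3 A B Cc D) (z4 A B Cc D).
Proof.
  unfold self_intersecting, nondegenerate, crossing_turns.
  rewrite !good_pair_iff, (turn_pattern_iff_opposite_straddles _ _ _ _ turns_closed).
  destruct straddles_turns as (e1 & e2 & e3 & e4 & e5 & e6 & e7 & e8).
  split.
  - intros [(n1 & n2 & n3 & n4) [H | H]].
    + left. apply segments_intersect_straddles in H; rewrite ?e1, ?e2, ?e3, ?e4; auto.
      unfold straddles in H; rewrite e1, e2, e3, e4 in H; lra.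
    + right. apply segments_intersect_straddles in H; rewrite ?e5, ?e6, ?e7, ?e8; auto.
      unfold straddles in H; rewrite e5, e6, e7, e8 in H; lra.
  - intros H; split.
    + destruct H as [[] | []]; repeat split; intro; nra.
    + destruct H as [[] | []]; [left | right]; apply straddles_segments_intersect;
        unfold straddles; rewrite ?e1, ?e2, ?e3, ?e4, ?e5, ?e6, ?e7, ?e8; lra.
Qed.
End Quadrangle.

Lemma edges_closed A B Cc D :
  cadd (cadd (z1 A B Cc D) (z2 A B Cc D)) (cadd (z3 A B Cc D) (z4 A B Cc D)) = czero.
Proof. unfold z1, z2, z3, z4, cadd, csub, czero; simpl; f_equal; ring. Qed.

Lemma edges_of_path K w1 w2 w3 w4 :
  cadd (cadd w1 w2) (cadd w3 w4) = czero ->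
  let L := cadd K w1 in let M := cadd L w2 in let N := cadd M w3 in
  z1 K L M N = w1 /\ z2 K L M N = w2 /\ z3 K L M N = w3 /\ z4 K L M N = w4.
Proof.
  destruct K, w1, w2, w3, w4; unfold z1, z2, z3, z4, cadd, csub, czero; simpl.
  intros E; injection E as Ere Eim; repeat split; f_equal; lra.
Qed.

Definition orthonormal_pair (u1 u2 u3 u4 : Cpt) : Prop :=
  dot4 (re u1) (re u2) (re u3) (re u4) (re u1) (re u2) (re u3) (re u4) = 1 /\
  dot4 (im u1) (im u2) (im u3) (im u4) (im u1) (im u2) (im u3) (im u4) = 1 /\
  dot4 (re u1) (re u2) (re u3) (re u4) (im u1) (im u2) (im u3) (im u4) = 0.

Lemma orthonormal_pair_iff u1 u2 u3 u4 :
  orthonormal_pair u1 u2 u3 u4 <->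
  cadd (cadd (csq u1) (csq u2)) (cadd (csq u3) (csq u4)) = czero /\
  cabs (csq u1) + cabs (csq u2) + cabs (csq u3) + cabs (csq u4) = 2.
Proof.
  rewrite !cabs_csq; unfold orthonormal_pair, dot4, cdot, cadd, csq, cmul, czero; simpl.
  split.
  - intros (Ha & Hb & Hab); split; [f_equal|]; lra.
  - intros [E Hp]; injection E as Ere Eim; lra.
Qed.

Lemma orthonormal_basis_of_perp_pair u1 u2 u3 u4 v1 v2 v3 v4 :
  orthonormal_basis_of_perp u1 u2 u3 u4 v1 v2 v3 v4 -> orthonormal_pair v1 v2 v3 v4.
Proof. intros (Hcc & Hdd & Hcd & _); repeat split; assumption. Qed.

Lemma cdot_pos_of_same_sign u v :
  same_sign (imcw u v) (imcw (csq u) (csq v)) -> 0 < cdot u v.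
Proof.
  rewrite imcw_csq; unfold same_sign; intros H; nra.
Qed.

Lemma re_closing_pos (w1 w2 w3 w4 : Cpt) :
  0 < re w1 -> 0 < re w2 -> 0 < re w3 ->
  turn_pattern (2 * re w1 * im w1) (2 * re w2 * im w2) (2 * re w3 * im w3) (2 * re w4 * im w4) ->
  im (cmul (cmul w1 w2) (cmul w3 w4)) = 0 -> 0 <= re (cmul (cmul w1 w2) (cmul w3 w4)) ->
  0 < re w4.
Proof.
  destruct w1 as [r1 i1], w2 as [r2 i2], w3 as [r3 i3], w4 as [r4 i4].
  cbn [re im]; intros h1 h2 h3 Hp Him Hre.
  destruct (turn_pattern_nonzero _ _ _ _ Hp) as (_ & _ & _ & n4).
  destruct (Rlt_or_le 0 r4) as [|h4]; [assumption | exfalso].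
  assert (h4' : r4 < 0) by (destruct h4 as [| ->]; [assumption | now contradict n4; ring]).
  assert (Hi : turn_pattern i1 i2 i3 (- i4)).
  { replace (2 * r4 * i4) with (-2 * r4 * - i4) in Hp by ring.
    revert Hp; apply (turn_pattern_scale (2 * r1) (2 * r2) (2 * r3) (-2 * r4)); nra. }
  (* Then w1 w2 and w3 w4 (first pattern), resp. w1 w4 and w2 w3 (second pattern), lie in
     the same open half-plane, so their product is not a nonnegative real. *)
  destruct Hi as [(q12 & q23 & q34) | (q12 & q23 & q34)].
  - assert (q13 : i1 * i3 < 0) by nra.
    assert (q14 : 0 < i1 * i4) by nra.
    assert (Hx : 0 < i1 * (r1 * i2 + i1 * r2)) by nra.
    assert (Hy : 0 < i1 * (r3 * i4 + i3 * r4)) by nra.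
    apply (Rle_not_lt _ _ Hre), re_cmul_neg_same_half_plane; [cbn [re im cmul]; nra | exact Him].
  - assert (q13 : i1 * i3 < 0) by nra.
    assert (q14 : i1 * i4 < 0) by nra.
    assert (Hx : i1 * (r1 * i4 + i1 * r4) < 0) by nra.
    assert (Hy : i1 * (r2 * i3 + i2 * r3) < 0) by nra.
    apply (Rle_not_lt _ _ Hre).
    replace (cmul (cmul (mkC r1 i1) (mkC r2 i2)) (cmul (mkC r3 i3) (mkC r4 i4)))
      with (cmul (cmul (mkC r1 i1) (mkC r4 i4)) (cmul (mkC r2 i2) (mkC r3 i3)))
      by (unfold cmul; simpl; f_equal; ring).
    apply re_cmul_neg_same_half_plane; [cbn [re im cmul]; nra | rewrite <- Him; cbn [re im cmul]; ring].
Qed.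

Lemma cdot_closing_pos u1 u2 u3 u4 :
  0 < cdot u1 u2 -> 0 < cdot u2 u3 -> 0 < cdot u3 u4 ->
  crossing_turns (csq u1) (csq u2) (csq u3) (csq u4) -> 0 < cdot u4 u1.
Proof.
  unfold crossing_turns; rewrite !imcw_csq.
  intros h1 h2 h3 Hp.
  assert (Hre : forall u v, re (cmul (cconj u) v) = cdot u v) by (intros; now rewrite cconj_mul).
  assert (Him : forall u v, im (cmul (cconj u) v) = imcw u v) by (intros; now rewrite cconj_mul).
  rewrite <- !Hre, <- !Him in *.
  apply (re_closing_pos _ _ _ _ h1 h2 h3 Hp); rewrite cconj_mul_cycle; simpl.
  - reflexivity.
  - unfold cdot; repeat apply Rmult_le_pos; nra.
Qed.

(* The determinant of the 4x4 matrix with columns (re u_k, im u_k, re v_k, im v_k),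
   expanded along its first two rows. *)
Definition frame_det (u1 u2 u3 u4 v1 v2 v3 v4 : Cpt) : R :=
  imcw u1 u2 * imcw v3 v4 - imcw u1 u3 * imcw v2 v4 + imcw u1 u4 * imcw v2 v3 +
  imcw u2 u3 * imcw v1 v4 - imcw u2 u4 * imcw v1 v3 + imcw u3 u4 * imcw v1 v2.

Section OrthonormalFrame.
Variables u1 u2 u3 u4 v1 v2 v3 v4 : Cpt.
Hypothesis Hu : orthonormal_pair u1 u2 u3 u4.
Hypothesis Hv : orthonormal_basis_of_perp u1 u2 u3 u4 v1 v2 v3 v4.

Local Notation aa := (dot4 (re u1) (re u2) (re u3) (re u4) (re u1) (re u2) (re u3) (re u4)).
Local Notation bb := (dot4 (im u1) (im u2) (im u3) (im u4) (im u1) (im u2) (im u3) (im u4)).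
Local Notation ab := (dot4 (re u1) (re u2) (re u3) (re u4) (im u1) (im u2) (im u3) (im u4)).
Local Notation cc := (dot4 (re v1) (re v2) (re v3) (re v4) (re v1) (re v2) (re v3) (re v4)).
Local Notation dd := (dot4 (im v1) (im v2) (im v3) (im v4) (im v1) (im v2) (im v3) (im v4)).
Local Notation cd := (dot4 (re v1) (re v2) (re v3) (re v4) (im v1) (im v2) (im v3) (im v4)).
Local Notation ca := (dot4 (re v1) (re v2) (re v3) (re v4) (re u1) (re u2) (re u3) (re u4)).
Local Notation cb := (dot4 (re v1) (re v2) (re v3) (re v4) (im u1) (im u2) (im u3) (im u4)).
Local Notation da := (dot4 (im v1) (im v2) (im v3) (im v4) (re u1) (re u2) (re u3) (re u4)).
Local Notation db := (dot4 (im v1) (im v2) (im v3) (im v4) (im u1) (im u2) (im u3) (im u4)).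
Local Notation det := (frame_det u1 u2 u3 u4 v1 v2 v3 v4).

Lemma cdot_dual_cycle :
  cdot v1 v2 = - cdot u1 u2 /\ cdot v2 v3 = - cdot u2 u3 /\
  cdot v3 v4 = - cdot u3 u4 /\ cdot v4 v1 = - cdot u4 u1.
Proof.
  destruct Hu as (Haa & Hbb & Hab); destruct Hv as (Hcc & Hdd & Hcd & Hca & Hcb & Hda & Hdb).
  (* |O^T O - I|^2 = |O O^T - I|^2 in the Frobenius norm, for the matrix O with rows a, b, c, d. *)
  assert (E : (cdot u1 u1 + cdot v1 v1 - 1) ^ 2 + (cdot u2 u2 + cdot v2 v2 - 1) ^ 2 +
              (cdot u3 u3 + cdot v3 v3 - 1) ^ 2 + (cdot u4 u4 + cdot v4 v4 - 1) ^ 2 +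
              2 * ((cdot u1 u2 + cdot v1 v2) ^ 2 + (cdot u1 u3 + cdot v1 v3) ^ 2 +
                   (cdot u1 u4 + cdot v1 v4) ^ 2 + (cdot u2 u3 + cdot v2 v3) ^ 2 +
                   (cdot u2 u4 + cdot v2 v4) ^ 2 + (cdot u3 u4 + cdot v3 v4) ^ 2) =
              (aa - 1) ^ 2 + (bb - 1) ^ 2 + (cc - 1) ^ 2 + (dd - 1) ^ 2 +
              2 * (ab ^ 2 + cd ^ 2 + ca ^ 2 + cb ^ 2 + da ^ 2 + db ^ 2))
    by (unfold cdot, dot4; ring).
  rewrite Haa, Hbb, Hab, Hcc, Hdd, Hcd, Hca, Hcb, Hda, Hdb in E.
  enough (G : cdot u1 u2 + cdot v1 v2 = 0 /\ cdot u2 u3 + cdot v2 v3 = 0 /\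
                cdot u3 u4 + cdot v3 v4 = 0 /\ cdot u1 u4 + cdot v1 v4 = 0)
    by (unfold cdot in *; lra).
  revert E.
  generalize (cdot u1 u1 + cdot v1 v1 - 1) (cdot u2 u2 + cdot v2 v2 - 1)
    (cdot u3 u3 + cdot v3 v3 - 1) (cdot u4 u4 + cdot v4 v4 - 1)
    (cdot u1 u2 + cdot v1 v2) (cdot u1 u3 + cdot v1 v3) (cdot u1 u4 + cdot v1 v4)
    (cdot u2 u3 + cdot v2 v3) (cdot u2 u4 + cdot v2 v4) (cdot u3 u4 + cdot v3 v4).
  intros; repeat split; nra.
Qed.

Lemma frame_det_sqr : det * det = 1.
Proof.
  destruct Hu as (Haa & Hbb & Hab); destruct Hv as (Hcc & Hdd & Hcd & Hca & Hcb & Hda & Hdb).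
  (* det (O O^T) = (det O)^2; these are the columns of the Gram matrix O O^T. *)
  transitivity (frame_det (mkC aa ab) (mkC ab bb) (mkC ca cb) (mkC da db)
                          (mkC ca da) (mkC cb db) (mkC cc cd) (mkC cd dd)).
  - unfold frame_det, imcw, dot4; simpl; ring.
  - rewrite Haa, Hbb, Hab, Hcc, Hdd, Hcd, Hca, Hcb, Hda, Hdb.
    unfold frame_det, imcw; simpl; ring.
Qed.

Lemma imcw_dual_cycle :
  imcw v1 v2 = det * imcw u3 u4 /\ imcw v2 v3 = - (det * imcw u4 u1) /\
  imcw v3 v4 = det * imcw u1 u2 /\ imcw v4 v1 = - (det * imcw u2 u3).
Proof.
  pose proof frame_det_sqr as Hdet.
  destruct Hu as (Haa & Hbb & Hab); destruct Hv as (Hcc & Hdd & Hcd & _).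
  (* Lagrange's identity for the squared minors, and the Laplace expansion of det for the
     cross terms. *)
  assert (E : (imcw v1 v2 - det * imcw u3 u4) ^ 2 + (imcw v3 v4 - det * imcw u1 u2) ^ 2 +
              (imcw v1 v3 + det * imcw u2 u4) ^ 2 + (imcw v2 v4 + det * imcw u1 u3) ^ 2 +
              (imcw v1 v4 - det * imcw u2 u3) ^ 2 + (imcw v2 v3 - det * imcw u1 u4) ^ 2 =
              (cc * dd - cd ^ 2) + det * det * (aa * bb - ab ^ 2) - 2 * (det * det))
    by (unfold frame_det, imcw, dot4; ring).
  rewrite Haa, Hbb, Hab, Hcc, Hdd, Hcd, Hdet in E.
  enough (G : imcw v1 v2 - det * imcw u3 u4 = 0 /\ imcw v3 v4 - det * imcw u1 u2 = 0 /\
              imcw v1 v4 - det * imcw u2 u3 = 0 /\ imcw v2 v3 - det * imcw u1 u4 = 0)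
    by (unfold imcw in *; repeat split; nra).
  revert E.
  generalize (imcw v1 v2 - det * imcw u3 u4) (imcw v3 v4 - det * imcw u1 u2)
    (imcw v1 v3 + det * imcw u2 u4) (imcw v2 v4 + det * imcw u1 u3)
    (imcw v1 v4 - det * imcw u2 u3) (imcw v2 v3 - det * imcw u1 u4).
  intros; repeat split; nra.
Qed.

Lemma crossing_turns_dual :
  0 < cdot u1 u2 -> 0 < cdot u2 u3 -> 0 < cdot u3 u4 -> 0 < cdot u4 u1 ->
  crossing_turns (csq u1) (csq u2) (csq u3) (csq u4) ->
  crossing_turns (csq v1) (csq v2) (csq v3) (csq v4).
Proof.
  intros h1 h2 h3 h4; unfold crossing_turns; rewrite !imcw_csq; intros Hp.
  pose proof frame_det_sqr as Hdet.
  destruct cdot_dual_cycle as (e1 & e2 & e3 & e4).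
  destruct imcw_dual_cycle as (f1 & f2 & f3 & f4).
  rewrite e1, e2, e3, e4, f1, f2, f3, f4.
  rewrite turn_pattern_scale in Hp by nra.
  apply turn_pattern_dual in Hp.
  assert (Hc : forall r s, 0 < r -> 0 < s -> 0 < -2 * det * r * (-2 * det * s)).
  { intros r s hr hs.
    replace (-2 * det * r * (-2 * det * s)) with (4 * (det * det) * (r * s)) by ring.
    rewrite Hdet; nra. }
  rewrite <- (turn_pattern_scale (-2 * det * cdot u1 u2) (-2 * det * cdot u2 u3)
                (-2 * det * cdot u3 u4) (-2 * det * cdot u4 u1)) in Hp by auto.
  assert (E : forall r i, 2 * - r * (det * i) = -2 * det * r * i) by (intros; ring).
  assert (E' : forall r i, 2 * - r * - (det * i) = -2 * det * r * - i) by (intros; ring).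
  rewrite !E, !E'; exact Hp.
Qed.
End OrthonormalFrame.

Theorem theorem4p1 :
  forall (A B Cc D : Cpt) (u1 u2 u3 u4 v1 v2 v3 v4 : Cpt) (K : Cpt),
    nondegenerate A B Cc D ->
    self_intersecting A B Cc D ->
    perimeter A B Cc D = 2 ->
    admissible_roots A B Cc D u1 u2 u3 u4 ->
    orthonormal_basis_of_perp u1 u2 u3 u4 v1 v2 v3 v4 ->
    let L := cadd K (csq v1) in
    let M := cadd L (csq v2) in
    let N := cadd M (csq v3) in
    csub K N = csq v4 /\ self_intersecting K L M N.
Proof.
  intros A B Cc D u1 u2 u3 u4 v1 v2 v3 v4 K _ Hsi Hper Hroots Hv; cbv zeta.
  destruct Hroots as (Hz1 & Hz2 & Hz3 & Hz4 & Hs12 & Hs23 & Hs34).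
  rewrite <- Hz1, <- Hz2 in Hs12; rewrite <- Hz2, <- Hz3 in Hs23; rewrite <- Hz3, <- Hz4 in Hs34.
  rewrite self_intersecting_iff_crossing_turns, <- Hz1, <- Hz2, <- Hz3, <- Hz4 in Hsi.
  assert (Hu : orthonormal_pair u1 u2 u3 u4).
  { apply orthonormal_pair_iff; rewrite Hz1, Hz2, Hz3, Hz4.
    split; [apply edges_closed | exact Hper]. }
  apply cdot_pos_of_same_sign in Hs12, Hs23, Hs34.
  pose proof (cdot_closing_pos _ _ _ _ Hs12 Hs23 Hs34 Hsi) as Hs41.
  destruct (edges_of_path K (csq v1) (csq v2) (csq v3) (csq v4)) as (E1 & E2 & E3 & E4).
  { now apply orthonormal_pair_iff, (orthonormal_basis_of_perp_pair u1 u2 u3 u4). }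
  split; [exact E4|].
  rewrite self_intersecting_iff_crossing_turns, E1, E2, E3, E4.
  exact (crossing_turns_dual _ _ _ _ _ _ _ _ Hu Hv Hs12 Hs23 Hs34 Hs41 Hsi).
Qed.
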